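(* Let $1\le p<\infty$. Let $\boldsymbol v=(v_n)_{n\in\mathbb{N}}$ and $\boldsymbol w=(w_n)_{n\in\mathbb{N}}$ be weight sequences such that $B_{\boldsymbol v}$ is frequently hypercyclic and $B_{\boldsymbol w}$ is hypercyclic on $\ell_p$. Assume that for all increasing sequences $(m_k)$ and $(n_k)$ of positive integers tending to infinity with $\liminf_{k\to\infty}n_k/m_k>0$ and $\limsup_{k\to\infty}n_k/m_k<1$, \[ \sum_{l\ge1}\frac{|w_1\cdots w_{m_l}|^p}{|v_1\cdots v_{m_l}|^p\,|w_1\cdots w_{m_l-n_l}|^p}=\infty . \] Then $FHC(B_{\boldsymbol v})\cap HC(B_{\boldsymbol w})=\emptyset$.
   Context: $\ell_p$ is the space of complex sequences $(x_n)_{n\ge0}$ with finite $\|x\|_p$, unit vectors $(e_n)_{n\ge0}$. A weight is a bounded sequence of nonzero complex numbers; $B_{\boldsymbol w}e_0=0$, $B_{\boldsymbol w}e_n=w_ne_{n-1}$; the empty product $w_1\cdots w_0$ equals $1$. $HC(T)$ is the set of vectors whose orbit $\{T^nx\}$ is dense; $FHC(T)$ is the set of vectors $x$ such that for every nonempty open $U$, $\{n:T^nx\in U\}$ has positive lower density ($\liminf_n\#(\cdot\cap[1,n])/n>0$). An operator is (frequently) hypercyclic if it has a (frequently) hypercyclic vector. *)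

From Stdlib Require Import Reals ClassicalEpsilon.
From Coquelicot Require Import Coquelicot.
Open Scope R_scope.

Definition rpow (a p : R) : R := if Req_EM_T a 0 then 0 else Rpower a p.

Definition seqC := nat -> C.

Definition in_lp (p : R) (x : seqC) : Prop :=
  ex_series (fun n => rpow (Cmod (x n)) p).

Definition lp_norm (p : R) (x : seqC) : R :=
  rpow (Series (fun n => rpow (Cmod (x n)) p)) (/ p).

Definition lp_dist (p : R) (x y : seqC) : R :=
  lp_norm p (fun n => Cminus (x n) (y n)).

Definition is_weight (w : nat -> C) : Prop :=
  (forall n, (1 <= n)%nat -> w n <> 0%C) /\ (exists M, forall n, Cmod (w n) <= M).

Fixpoint wprod (w : nat -> C) (n : nat) : C :=
  match n with
  | O => 1%C
  | S k => Cmult (wprod w k) (w (S k))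
  end.

(* weighted backward shift: B_w e_0 = 0, B_w e_n = w_n e_{n-1},
   i.e. (B_w x)_n = w_{n+1} x_{n+1} *)
Definition Bw (w : nat -> C) (x : seqC) : seqC :=
  fun n => Cmult (w (S n)) (x (S n)).

Definition iterT (T : seqC -> seqC) (k : nat) (x : seqC) : seqC :=
  Nat.iter k T x.

Definition lp_open_nonempty (p : R) (U : seqC -> Prop) : Prop :=
  (forall y, U y -> in_lp p y) /\ (exists y, U y) /\
  (forall y, U y -> exists eps, 0 < eps /\
     forall z, in_lp p z -> lp_dist p z y < eps -> U z).

Definition HC (p : R) (T : seqC -> seqC) (x : seqC) : Prop :=
  in_lp p x /\
  forall y eps, in_lp p y -> 0 < eps -> exists n, lp_dist p (iterT T n x) y < eps.

Definition indic (P : Prop) : R :=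
  if excluded_middle_informative P then 1 else 0.

Definition visit_count (T : seqC -> seqC) (x : seqC) (U : seqC -> Prop) (N : nat) : R :=
  sum_n_m (fun k => indic (U (iterT T k x))) 1 N.

Definition FHC (p : R) (T : seqC -> seqC) (x : seqC) : Prop :=
  in_lp p x /\
  forall U, lp_open_nonempty p U ->
    Rbar_lt (Finite 0)
      (LimInf_seq (fun N => visit_count T x U (S N) / INR (S N))).

Definition hypercyclic (p : R) (T : seqC -> seqC) : Prop := exists x, HC p T x.
Definition freq_hypercyclic (p : R) (T : seqC -> seqC) : Prop := exists x, FHC p T x.

(* Frequent hypercyclicity of B_v, applied to the
   neighbourhood {y : |y_0 - 1| < 1/2} of e_0, gives K such that for every large j
   some m in (2j, Kj] satisfies |v_1 ... v_m x_m| > 1/2.  Hypercyclicity of B_w (the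
   orbit of x never vanishes and comes close to 0) gives a sparse sequence j_l,
   with j_(l+1) >= K j_l, along which every coordinate of B_w^(j_l) x is below
   2^(-l-2).  For the corresponding m_l, coordinate m_l - j_l of B_w^(j_l) x is
   w_(m_l - j_l + 1) ... w_(m_l) x_(m_l), so the l-th term of the series in the
   hypothesis is at most 2^(-l-1); the series converges although j_l / m_l stays
   in [1/K, 1/2]. *)

From Stdlib Require Import Reals Lra Lia ClassicalEpsilon.
From Coquelicot Require Import Coquelicot.
Open Scope R_scope.

Lemma rpow_ge0 a p : 0 <= rpow a p.
Proof.
  unfold rpow; destruct (Req_EM_T a 0); [lra|].
  left; apply exp_pos.
Qed.

Lemma rpow_gt0 a p : 0 < a -> 0 < rpow a p.
Proof.
  intros Ha; unfold rpow; destruct (Req_EM_T a 0); [lra|].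
  apply exp_pos.
Qed.

Lemma rpow_le_compat a b p : 0 < p -> 0 <= a <= b -> rpow a p <= rpow b p.
Proof.
  intros Hp [Ha Hab]; unfold rpow at 1; destruct (Req_EM_T a 0).
  - apply rpow_ge0.
  - unfold rpow; destruct (Req_EM_T b 0); [lra|].
    apply Rle_Rpower_l; lra.
Qed.

Lemma rpow_mult a b p : 0 <= a -> 0 <= b -> rpow (a * b) p = rpow a p * rpow b p.
Proof.
  intros Ha Hb; unfold rpow.
  destruct (Req_EM_T (a * b) 0) as [Eab|Eab];
    destruct (Req_EM_T a 0); destruct (Req_EM_T b 0); subst; try lra.
  - apply Rmult_integral in Eab; tauto.
  - rewrite Rpower_mult_distr; lra.
Qed.

Lemma rpow_rpow_inv a p : 0 < p -> 0 <= a -> rpow (rpow a p) (/ p) = a.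
Proof.
  intros Hp Ha; destruct (Req_dec a 0) as [->|Ha0].
  - unfold rpow; do 2 destruct (Req_EM_T 0 0); lra.
  - assert (Hpos : 0 < rpow a p) by (apply rpow_gt0; lra).
    unfold rpow at 1; destruct (Req_EM_T (rpow a p) 0); [lra|].
    unfold rpow; destruct (Req_EM_T a 0); [lra|].
    rewrite Rpower_mult, Rinv_r by lra; apply Rpower_1; lra.
Qed.

Lemma rpow_le_self t p : 1 <= p -> 0 <= t <= 1 -> rpow t p <= t.
Proof.
  intros Hp Ht; unfold rpow; destruct (Req_EM_T t 0); [lra|].
  assert (Hln : ln t <= 0) by (rewrite <- ln_1; apply ln_le; lra).
  unfold Rpower; rewrite <- (exp_ln t) at 2 by lra.
  destruct (Rle_lt_or_eq_dec (p * ln t) (ln t)) as [Hlt|Heq]; [nra| |].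
  - left; now apply exp_increasing.
  - rewrite Heq; lra.
Qed.

Lemma rpow_div_le a b c p : 1 <= p -> 0 < b -> 0 < c -> 0 <= a <= b * c ->
  rpow a p / (rpow b p * rpow c p) <= a / (b * c).
Proof.
  intros Hp Hb Hc Ha.
  set (t := a / (b * c)).
  assert (Ht : 0 <= t <= 1).
  { unfold t; split; [apply Rle_mult_inv_pos; nra|].
    apply Rmult_le_reg_r with (b * c); [nra|]; unfold Rdiv.
    rewrite Rmult_assoc, Rinv_l; nra. }
  assert (Hat : a = t * b * c) by (unfold t; field; lra).
  pose proof (rpow_gt0 b p Hb); pose proof (rpow_gt0 c p Hc).
  rewrite Hat, !rpow_mult by nra.
  replace (rpow t p * rpow b p * rpow c p / (rpow b p * rpow c p)) with (rpow t p)
    by (field; lra).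
  now apply rpow_le_self.
Qed.

Lemma sum_n_ge_term (s : nat -> R) k j :
  (forall n, 0 <= s n) -> (k <= j)%nat -> s k <= sum_n s j.
Proof.
  intros Hs Hkj; induction Hkj.
  - destruct k; [now rewrite sum_O; lra|].
    rewrite sum_Sn; unfold plus; simpl.
    assert (0 <= sum_n s k).
    { apply Rle_trans with (sum_n_m (fun _ => 0) 0 k); [rewrite sum_n_m_const; lra|].
      apply sum_n_m_le, Hs. }
    lra.
  - rewrite sum_Sn; unfold plus; simpl; specialize (Hs (S m)); lra.
Qed.

Lemma Series_ge_term (s : nat -> R) k :
  (forall n, 0 <= s n) -> ex_series s -> s k <= Series s.
Proof.
  intros Hs Hex.
  assert (Hlim : is_lim_seq (fun j => sum_n s (j + k)) (Series s)).
  { apply is_lim_seq_incr_n, Series_correct, Hex. }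
  apply (is_lim_seq_le (fun _ => s k) (fun j => sum_n s (j + k)) (s k) (Series s));
    [|apply is_lim_seq_const|exact Hlim].
  intros j; apply sum_n_ge_term; [exact Hs|lia].
Qed.

Lemma Cminus_0_r (a : C) : Cminus a 0%C = a.
Proof. unfold Cminus; rewrite Copp_0; apply Cplus_0_r. Qed.

Lemma Cmod_le_lp_norm p z k : 0 < p -> in_lp p z -> Cmod (z k) <= lp_norm p z.
Proof.
  intros Hp Hz; unfold lp_norm.
  rewrite <- (rpow_rpow_inv (Cmod (z k)) p) by (auto; apply Cmod_ge_0).
  apply rpow_le_compat; [now apply Rinv_0_lt_compat|split; [apply rpow_ge0|]].
  apply (Series_ge_term (fun n => rpow (Cmod (z n)) p)); [intros; apply rpow_ge0|exact Hz].
Qed.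

Lemma ex_series_le_R (a b : nat -> R) :
  (forall n, 0 <= a n <= b n) -> ex_series b -> ex_series a.
Proof.
  intros Hab; apply (@ex_series_le R_AbsRing R_CompleteNormedModule); intros n.
  unfold norm; simpl; unfold abs; simpl; rewrite Rabs_pos_eq; apply Hab.
Qed.

Lemma ex_series_scal_R (c : R) (a : nat -> R) :
  ex_series a -> ex_series (fun n => c * a n).
Proof. apply (@ex_series_scal_l R_AbsRing R_NormedModule). Qed.

Lemma in_lp_sub p z y : 0 < p -> in_lp p z -> in_lp p y -> in_lp p (fun n => Cminus (z n) (y n)).
Proof.
  intros Hp Hz Hy; unfold in_lp in *.
  apply (ex_series_le_R _ (fun n => rpow 2 p * (rpow (Cmod (z n)) p + rpow (Cmod (y n)) p))).
  2: { apply ex_series_scal_R, (@ex_series_plus R_AbsRing R_NormedModule); assumption. }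
  intros n; split; [apply rpow_ge0|].
  set (a := Cmod (z n)); set (b := Cmod (y n)).
  assert (Ha : 0 <= a) by apply Cmod_ge_0; assert (Hb : 0 <= b) by apply Cmod_ge_0.
  assert (Hzy : Cmod (Cminus (z n) (y n)) <= 2 * Rmax a b).
  { unfold Cminus; eapply Rle_trans; [apply Cmod_triangle|].
    rewrite Cmod_opp; fold a b; pose proof (Rmax_l a b); pose proof (Rmax_r a b); lra. }
  eapply Rle_trans; [apply rpow_le_compat; [exact Hp|split; [apply Cmod_ge_0|exact Hzy]]|].
  rewrite rpow_mult by (pose proof (Rmax_l a b); lra).
  apply Rmult_le_compat_l; [apply rpow_ge0|].
  pose proof (rpow_ge0 a p); pose proof (rpow_ge0 b p).
  unfold Rmax; destruct (Rle_dec a b); lra.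
Qed.

Lemma in_lp_Bw p w M x :
  0 < p -> (forall n, Cmod (w n) <= M) -> in_lp p x -> in_lp p (Bw w x).
Proof.
  intros Hp HM Hx; unfold in_lp in *; apply ex_series_incr_1 in Hx.
  apply (ex_series_le_R _ (fun n => rpow M p * rpow (Cmod (x (S n))) p));
    [|now apply ex_series_scal_R].
  intros n; split; [apply rpow_ge0|].
  unfold Bw; rewrite Cmod_mult, rpow_mult by apply Cmod_ge_0.
  apply Rmult_le_compat_r; [apply rpow_ge0|].
  apply rpow_le_compat; [exact Hp|split; [apply Cmod_ge_0|apply HM]].
Qed.

Lemma in_lp_iterT p (T : seqC -> seqC) x k :
  (forall y, in_lp p y -> in_lp p (T y)) -> in_lp p x -> in_lp p (iterT T k x).
Proof. intros HT Hx; induction k; [exact Hx|apply HT, IHk]. Qed.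

Lemma rpow_0_l p : rpow 0 p = 0.
Proof. unfold rpow; destruct (Req_EM_T 0 0); lra. Qed.

Lemma in_lp_0 p : in_lp p (fun _ => 0%C).
Proof.
  apply (ex_series_ext (fun _ => 0)); [intros; now rewrite Cmod_0, rpow_0_l|].
  exists 0; change (is_lim_seq (sum_n (fun _ : nat => 0)) 0).
  apply (is_lim_seq_ext (fun _ => 0)); [|apply is_lim_seq_const].
  intros n; unfold sum_n; rewrite sum_n_m_const; ring.
Qed.

Fixpoint wprod_range (w : nat -> C) (n k : nat) : C :=
  match k with
  | O => 1%C
  | S k => Cmult (w (S n)) (wprod_range w (S n) k)
  end.

Lemma iterT_Bw_coord w (x : seqC) k : forall n,
  iterT (Bw w) k x n = Cmult (wprod_range w n k) (x (n + k)%nat).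
Proof.
  induction k as [|k IH]; intros n.
  - rewrite Nat.add_0_r; simpl; ring.
  - unfold iterT in *; simpl; unfold Bw at 1; rewrite IH.
    replace (S n + k)%nat with (n + S k)%nat by lia; simpl; ring.
Qed.

Lemma wprod_add w k : forall n, wprod w (n + k) = Cmult (wprod w n) (wprod_range w n k).
Proof.
  induction k as [|k IH]; intros n.
  - rewrite Nat.add_0_r; simpl; ring.
  - replace (n + S k)%nat with (S n + k)%nat by lia.
    rewrite IH; simpl; ring.
Qed.

Lemma wprod_range_0 w k : wprod_range w 0 k = wprod w k.
Proof. pose proof (wprod_add w k 0) as E; simpl in E; rewrite E; ring. Qed.

Lemma Cmult_neq0 (a b : C) : a <> 0%C -> b <> 0%C -> Cmult a b <> 0%C.
Proof.
  intros Ha Hb; apply Cmod_gt_0; rewrite Cmod_mult.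
  apply Cmod_gt_0 in Ha, Hb; nra.
Qed.

Lemma wprod_neq0 w n : is_weight w -> wprod w n <> 0%C.
Proof.
  intros [Hw _]; induction n as [|n IH]; simpl.
  - intros E; injection E; lra.
  - apply Cmult_neq0; [exact IH|apply Hw; lia].
Qed.

Lemma wprod_range_neq0 w n k : is_weight w -> wprod_range w n k <> 0%C.
Proof.
  intros Hw E; apply (wprod_neq0 w (n + k) Hw).
  rewrite wprod_add, E; apply Cmult_0_r.
Qed.

Lemma iterT_Bw_neq0 w (x : seqC) i m : is_weight w -> (i <= m)%nat -> x m <> 0%C ->
  iterT (Bw w) i x (m - i)%nat <> 0%C.
Proof.
  intros Hw Him Hx; rewrite iterT_Bw_coord.
  replace (m - i + i)%nat with m by lia.
  apply Cmult_neq0; [now apply wprod_range_neq0|exact Hx].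
Qed.

Definition coord0_near_1 (p : R) (y : seqC) : Prop :=
  in_lp p y /\ Cmod (Cminus (y O) 1%C) < 1/2.

Lemma lp_open_coord0_near_1 p : 0 < p -> lp_open_nonempty p (coord0_near_1 p).
Proof.
  intros Hp; split; [|split].
  - now intros y [Hy _].
  - exists (fun n => match n with O => RtoC 1 | S _ => RtoC 0 end); split.
    + unfold in_lp; apply (proj2 (ex_series_incr_1 _)); exact (in_lp_0 p).
    + replace (Cminus 1 1) with (RtoC 0) by (unfold Cminus; ring).
      rewrite Cmod_0; lra.
  - intros y [Hy Hy0]; exists (1/2 - Cmod (Cminus (y O) 1%C)); split; [lra|].
    intros z Hz Hzy; split; [exact Hz|].
    pose proof (Cmod_le_lp_norm p _ O Hp (in_lp_sub p z y Hp Hz Hy)) as Hc.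
    unfold lp_dist in Hzy; simpl in Hc.
    replace (Cminus (z O) 1%C) with (Cplus (Cminus (z O) (y O)) (Cminus (y O) 1%C))
      by (unfold Cminus; ring).
    eapply Rle_lt_trans; [apply Cmod_triangle|lra].
Qed.

Lemma coord0_near_1_Bw p v (x : seqC) m :
  coord0_near_1 p (iterT (Bw v) m x) -> 1/2 < Cmod (Cmult (wprod v m) (x m)).
Proof.
  intros [_ Hm]; rewrite iterT_Bw_coord, wprod_range_0 in Hm; simpl in Hm.
  set (a := Cmult (wprod v m) (x m)) in *.
  pose proof (Cmod_triangle a (Copp (Cminus a 1))) as Htri.
  replace (Cplus a (Copp (Cminus a 1))) with (RtoC 1) in Htri by (unfold Cminus; ring).
  rewrite Cmod_opp, Cmod_1 in Htri; lra.
Qed.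

Lemma LimInf_seq_gt0_eventually (u : nat -> R) :
  Rbar_lt 0 (LimInf_seq u) -> exists d N, 0 < d /\ forall n, (N <= n)%nat -> d < u n.
Proof.
  intros Hpos; destruct (ex_LimInf_seq u) as [l Hl].
  rewrite (is_LimInf_seq_unique _ _ Hl) in Hpos.
  destruct l as [r| |]; simpl in Hpos; [|destruct (Hl 1) as [N HN]|contradiction].
  - destruct (Hl (mkposreal (r / 2) ltac:(lra))) as [_ [N HN]].
    exists (r / 2), N; split; [lra|].
    intros n Hn; specialize (HN n Hn); simpl in HN; lra.
  - exists 1, N; split; [lra|exact HN].
Qed.

Lemma indic_le1 P : indic P <= 1.
Proof. unfold indic; destruct (excluded_middle_informative P); lra. Qed.

Lemma visit_count_le T x U N : visit_count T x U N <= INR N.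
Proof.
  unfold visit_count; eapply Rle_trans; [apply (sum_n_m_le _ (fun _ => 1)), (fun k => indic_le1 _)|].
  rewrite sum_n_m_const; replace (S N - 1)%nat with N by lia; lra.
Qed.

Lemma visit_count_window T x U M N :
  INR M < visit_count T x U N -> exists k, (M < k <= N)%nat /\ U (iterT T k x).
Proof.
  intros Hgt; destruct (Nat.le_gt_cases N M) as [HNM|HMN].
  - pose proof (visit_count_le T x U N); apply le_INR in HNM; lra.
  - apply NNPP; intros Hnone.
    assert (Hzero : sum_n_m (fun k => indic (U (iterT T k x))) (S M) N = 0).
    { rewrite <- (Rmult_0_r (INR (S N - S M))), <- sum_n_m_const.
      apply sum_n_m_ext_loc; intros k Hk; unfold indic.
      destruct (excluded_middle_informative (U (iterT T k x))) as [HU|]; [|reflexivity].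
      exfalso; apply Hnone; exists k; split; [lia|exact HU]. }
    pose proof (visit_count_le T x U M) as HleM.
    unfold visit_count in *.
    rewrite (sum_n_m_Chasles _ 1 M N), Hzero in Hgt by lia.
    unfold plus in Hgt; simpl in Hgt; lra.
Qed.

Lemma FHC_Bw_large_coords p v x : 0 < p -> FHC p (Bw v) x ->
  exists (K J0 : nat) (M : nat -> nat), (2 <= K)%nat /\
    forall j, (J0 <= j)%nat ->
      (2 * j < M j <= K * j)%nat /\ 1/2 < Cmod (Cmult (wprod v (M j)) (x (M j))).
Proof.
  intros Hp [_ Hfreq].
  specialize (Hfreq _ (lp_open_coord0_near_1 p Hp)).
  destruct (LimInf_seq_gt0_eventually _ Hfreq) as [d [N1 [Hd HN1]]].
  destruct (archimed_cor1 (d / 2) ltac:(lra)) as [K0 [HK0 HK0pos]].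
  (* with [d K > 2], more than [2 j] of the first [K j] iterates visit the set *)
  set (K := Nat.max 2 K0).
  assert (HdK : 2 < d * INR K).
  { assert (INR K0 <= INR K) by (apply le_INR; lia).
    assert (0 < INR K0) by (apply lt_0_INR; lia).
    apply (Rmult_lt_compat_r (INR K0)) in HK0; [|lra].
    rewrite Rinv_l in HK0 by lra; nra. }
  assert (Hvisit : forall j, exists m, (S N1 <= j)%nat ->
            (2 * j < m <= K * j)%nat /\ coord0_near_1 p (iterT (Bw v) m x)).
  { intros j; destruct (Nat.le_gt_cases (S N1) j) as [Hj|Hj]; [|exists O; lia].
    assert (HKj : 0 < INR (K * j)) by (apply lt_0_INR; nia).
    specialize (HN1 (K * j - 1)%nat ltac:(nia)).
    replace (S (K * j - 1)) with (K * j)%nat in HN1 by nia.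
    apply (Rmult_lt_compat_r (INR (K * j))) in HN1; [|exact HKj].
    unfold Rdiv in HN1; rewrite Rmult_assoc, Rinv_l, Rmult_1_r in HN1 by lra.
    destruct (visit_count_window (Bw v) x (coord0_near_1 p) (2 * j) (K * j)) as [m Hm].
    { rewrite !mult_INR in *; simpl in *.
      assert (0 < INR j) by (apply lt_0_INR; lia); nra. }
    exists m; intros _; split; [lia|apply Hm]. }
  destruct (choice _ Hvisit) as [M HM].
  exists K, (S N1), M; split; [lia|].
  intros j Hj; destruct (HM j Hj) as [Hrange Hnear].
  split; [exact Hrange|now apply coord0_near_1_Bw with p].
Qed.

Lemma finite_min_pos (f : nat -> R) J :
  (forall i, 0 < f i) -> exists e, 0 < e /\ forall i, (i < J)%nat -> e <= f i.
Proof.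
  intros Hf; induction J as [|J [e [He Hle]]].
  - exists 1; split; [lra|intros; lia].
  - exists (Rmin e (f J)); split; [now apply Rmin_glb_lt|].
    intros i Hi; destruct (Nat.eq_dec i J) as [->|Hne]; [apply Rmin_r|].
    eapply Rle_trans; [apply Rmin_l|apply Hle; lia].
Qed.

Lemma HC_iterates_small p (T : seqC -> seqC) x :
  0 < p -> (forall y, in_lp p y -> in_lp p (T y)) -> HC p T x ->
  (forall i, exists k, iterT T i x k <> 0%C) ->
  forall J eps, 0 < eps -> exists j, (J <= j)%nat /\ forall k, Cmod (iterT T j x k) < eps.
Proof.
  intros Hp HT [Hx Hdense] Hnz J eps Heps.
  set (dist0 := fun i => lp_dist p (iterT T i x) (fun _ => 0%C)).
  assert (Hcoord : forall i k, Cmod (iterT T i x k) <= dist0 i).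
  { intros i k; unfold dist0, lp_dist.
    rewrite <- (Cminus_0_r (iterT T i x k)).
    apply (Cmod_le_lp_norm p (fun n => Cminus (iterT T i x n) 0%C)); [exact Hp|].
    apply in_lp_sub; [exact Hp|now apply in_lp_iterT|apply in_lp_0]. }
  assert (Hpos : forall i, 0 < dist0 i).
  { intros i; destruct (Hnz i) as [k Hk]; apply Cmod_gt_0 in Hk.
    specialize (Hcoord i k); lra. }
  destruct (finite_min_pos dist0 J Hpos) as [e [He Hmin]].
  destruct (Hdense (fun _ => 0%C) (Rmin eps e) (in_lp_0 p)) as [j Hj];
    [now apply Rmin_glb_lt|].
  fold (dist0 j) in Hj; pose proof (Rmin_l eps e); pose proof (Rmin_r eps e).
  exists j; split.
  - destruct (Nat.le_gt_cases J j) as [|HjJ]; [assumption|].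
    specialize (Hmin j HjJ); lra.
  - intros k; specialize (Hcoord j k); lra.
Qed.

Lemma nat_seq_choice (Q : nat -> nat -> Prop) (g : nat -> nat) :
  (forall l lo, exists j, (lo <= j)%nat /\ Q l j) ->
  exists js : nat -> nat, forall l, Q l (js l) /\ (g (js l) <= js (S l))%nat.
Proof.
  intros HQ.
  destruct (choice (fun '(l, lo) j => (lo <= j)%nat /\ Q l j)) as [F HF].
  { intros [l lo]; apply HQ. }
  exists (fix js l := match l with O => F (O, O) | S l => F (S l, g (js l)) end).
  intros l; split.
  - destruct l; apply (HF (_, _)).
  - apply (HF (S l, _)).
Qed.

Lemma is_lim_seq_INR_of_ge (f : nat -> nat) :
  (forall k, (k <= f k)%nat) -> is_lim_seq (fun k => INR (f k)) p_infty.
Proof.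
  intros Hf; apply is_lim_seq_le_p_loc with INR; [|apply is_lim_seq_INR].
  exists O; intros k _; apply le_INR, Hf.
Qed.

Lemma LimInf_LimSup_between (u : nat -> R) a b :
  (forall k, a <= u k <= b) ->
  Rbar_le a (LimInf_seq u) /\ Rbar_le (LimSup_seq u) b.
Proof.
  intros Hu; split.
  - rewrite <- (LimInf_seq_const a); apply LimInf_le; exists O; intros k _; apply Hu.
  - rewrite <- (LimSup_seq_const b); apply LimSup_le; exists O; intros k _; apply Hu.
Qed.

Lemma sum_n_half_pow L : sum_n (fun l => (1/2) ^ S l) L = 1 - (1/2) ^ S L.
Proof.
  induction L as [|L IH]; [rewrite sum_O; simpl; lra|].
  rewrite sum_Sn, IH; unfold plus; simpl; lra.
Qed.

Lemma sum_n_not_p_infty_of_le_half_pow (a : nat -> R) :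
  (forall l, a l <= (1/2) ^ S l) -> ~ is_lim_seq (sum_n a) p_infty.
Proof.
  intros Ha Hlim.
  assert (Hle : forall L, sum_n a L <= 1).
  { intros L; unfold sum_n; eapply Rle_trans; [apply sum_n_m_le, Ha|].
    fold (sum_n (fun l => (1/2) ^ S l) L); rewrite sum_n_half_pow.
    pose proof (pow_lt (1/2) (S L) ltac:(lra)); lra. }
  exact (is_lim_seq_le _ _ _ _ Hle Hlim (is_lim_seq_const 1)).
Qed.

Lemma weight_ratio_le p v w (x : seqC) m j eps :
  1 <= p -> is_weight v -> is_weight w -> (j <= m)%nat -> eps <= 1/2 ->
  1/2 < Cmod (Cmult (wprod v m) (x m)) ->
  Cmod (iterT (Bw w) j x (m - j)%nat) < eps ->
  rpow (Cmod (wprod w m)) p /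
    (rpow (Cmod (wprod v m)) p * rpow (Cmod (wprod w (m - j))) p) <= 2 * eps.
Proof.
  intros Hp Hv Hw Hjm Heps Hvx Hwx.
  rewrite iterT_Bw_coord in Hwx; replace (m - j + j)%nat with m in Hwx by lia.
  assert (Hsplit : wprod w m = Cmult (wprod w (m - j)) (wprod_range w (m - j) j)).
  { rewrite <- wprod_add; f_equal; lia. }
  rewrite Cmod_mult in Hvx, Hwx.
  set (a := Cmod (wprod w m)) in *; set (b := Cmod (wprod v m)) in *.
  set (c := Cmod (wprod w (m - j))) in *; set (r := Cmod (wprod_range w (m - j) j)) in *.
  set (X := Cmod (x m)) in *.
  assert (Ha : a = c * r) by (unfold a; rewrite Hsplit; apply Cmod_mult).
  assert (Hb : 0 < b) by apply Cmod_gt_0, wprod_neq0, Hv.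
  assert (Hc : 0 < c) by apply Cmod_gt_0, wprod_neq0, Hw.
  assert (Hr : 0 <= r) by apply Cmod_ge_0.
  assert (HX : 0 <= X) by apply Cmod_ge_0.
  assert (Hrb : r <= 2 * eps * b) by nra.
  assert (Hq : a / (b * c) = r / b) by (rewrite Ha; field; lra).
  eapply Rle_trans; [apply rpow_div_le; [exact Hp|exact Hb|exact Hc|]|].
  - assert (r <= b) by (apply Rle_trans with (2 * eps * b); [exact Hrb|nra]).
    rewrite Ha; split; nra.
  - rewrite Hq; apply Rmult_le_reg_r with b; [exact Hb|].
    unfold Rdiv; rewrite Rmult_assoc, Rinv_l by lra; lra.
Qed.

Lemma ratio_between (j m K : nat) : (0 < j)%nat -> (2 * j < m <= K * j)%nat ->
  1 / INR K <= INR j / INR m <= 1/2.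
Proof.
  intros Hj [Hlo Hhi].
  assert (H0j : 0 < INR j) by now apply lt_0_INR.
  assert (H2 : 2 * INR j < INR m).
  { replace 2 with (INR 2) by reflexivity; rewrite <- mult_INR; now apply lt_INR. }
  assert (HK : INR m <= INR K * INR j) by (rewrite <- mult_INR; now apply le_INR).
  assert (0 < INR K) by nra.
  split; apply Rmult_le_reg_r with (INR m * INR K); try nra;
    unfold Rdiv; field_simplify; nra.
Qed.

Lemma FHC_HC_Bw_sparse_sequences p v w x :
  0 < p -> is_weight v -> is_weight w -> FHC p (Bw v) x -> HC p (Bw w) x ->
  exists (K : nat) (ms js : nat -> nat), (2 <= K)%nat /\ forall l,
    (S l <= js l)%nat /\ (K * js l <= js (S l))%nat /\ (2 * js l < ms l <= K * js l)%nat /\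
    1/2 < Cmod (Cmult (wprod v (ms l)) (x (ms l))) /\
    Cmod (iterT (Bw w) (js l) x (ms l - js l)%nat) < (1/2) ^ S (S l).
Proof.
  intros Hp Hv Hw Hfhc Hhc.
  destruct (FHC_Bw_large_coords p v x Hp Hfhc) as [K [J0 [M [HK HM]]]].
  assert (Horbit : forall i, exists k, iterT (Bw w) i x k <> 0%C).
  { intros i; destruct (HM (Nat.max J0 i) ltac:(lia)) as [Hrange Hlarge].
    exists (M (Nat.max J0 i) - i)%nat; apply iterT_Bw_neq0; [exact Hw|lia|].
    intros E; rewrite E, Cmult_0_r, Cmod_0 in Hlarge; lra. }
  pose proof Hw as [_ [Mw HMw]].
  pose proof (HC_iterates_small p (Bw w) x Hp (fun y => in_lp_Bw p w Mw y Hp HMw) Hhc Horbit)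
    as Hsmall.
  destruct (nat_seq_choice
              (fun l j => (J0 <= j)%nat /\ (S l <= j)%nat /\
                          forall k, Cmod (iterT (Bw w) j x k) < (1/2) ^ S (S l))
              (fun j => K * j)%nat) as [js Hjs].
  { intros l lo.
    destruct (Hsmall (Nat.max (Nat.max J0 (S l)) lo) ((1/2) ^ S (S l)))
      as [j [Hj Hjsmall]]; [apply pow_lt; lra|].
    exists j; repeat split; [lia|lia|lia|exact Hjsmall]. }
  exists K, (fun l => M (js l)), js; split; [exact HK|].
  intros l; destruct (Hjs l) as [[HJ0 [Hl Hjsmall]] HKjs].
  destruct (HM (js l) HJ0) as [Hrange Hlarge].
  repeat split; [lia|lia|lia|lia|exact Hlarge|apply Hjsmall].
Qed.

Theorem proposition4p6 (p : R) (v w : nat -> C) :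
  1 <= p ->
  is_weight v -> is_weight w ->
  freq_hypercyclic p (Bw v) ->
  hypercyclic p (Bw w) ->
  (forall m n : nat -> nat,
      (forall k, (1 <= m k)%nat) -> (forall k, (1 <= n k)%nat) ->
      (forall k, (m k <= m (S k))%nat) -> (forall k, (n k <= n (S k))%nat) ->
      is_lim_seq (fun k => INR (m k)) p_infty ->
      is_lim_seq (fun k => INR (n k)) p_infty ->
      Rbar_lt (Finite 0) (LimInf_seq (fun k => INR (n k) / INR (m k))) ->
      Rbar_lt (LimSup_seq (fun k => INR (n k) / INR (m k))) (Finite 1) ->
      is_lim_seq
        (sum_n (fun l =>
           rpow (Cmod (wprod w (m l))) p /
           (rpow (Cmod (wprod v (m l))) p * rpow (Cmod (wprod w (m l - n l))) p)))
        p_infty) ->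
  forall x : seqC, ~ (FHC p (Bw v) x /\ HC p (Bw w) x).
Proof.
  intros Hp1 Hv Hw _ _ Hdiv x [Hfhc Hhc].
  assert (Hp : 0 < p) by lra.
  destruct (FHC_HC_Bw_sparse_sequences p v w x Hp Hv Hw Hfhc Hhc) as [K [ms [js [HK Hseq]]]].
  apply (sum_n_not_p_infty_of_le_half_pow
           (fun l => rpow (Cmod (wprod w (ms l))) p /
              (rpow (Cmod (wprod v (ms l))) p * rpow (Cmod (wprod w (ms l - js l))) p))).
  - intros l; destruct (Hseq l) as [_ [_ [Hrange [Hlarge Hsmall]]]].
    assert (Heps : (1/2) ^ S (S l) <= 1/2).
    { pose proof (pow_lt_1_compat (1/2) (S l) ltac:(lra) ltac:(lia)); simpl in *; lra. }
    replace ((1/2) ^ S l) with (2 * (1/2) ^ S (S l)) by (simpl; field).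
    apply (weight_ratio_le p v w x); auto; lia.
  - assert (Hratio : forall l, 1 / INR K <= INR (js l) / INR (ms l) <= 1/2).
    { intros l; destruct (Hseq l) as [Hl [_ [Hrange _]]]; apply ratio_between; lia. }
    destruct (LimInf_LimSup_between _ _ _ Hratio) as [Hinf Hsup].
    apply Hdiv.
    + intros l; destruct (Hseq l) as [_ [_ [Hrange _]]]; lia.
    + intros l; destruct (Hseq l) as [Hl _]; lia.
    + intros l; destruct (Hseq l) as [_ [HKjs [Hrange _]]].
      destruct (Hseq (S l)) as [_ [_ [Hrange' _]]]; nia.
    + intros l; destruct (Hseq l) as [_ [HKjs _]]; nia.
    + apply is_lim_seq_INR_of_ge; intros l; destruct (Hseq l) as [Hl [_ [Hrange _]]]; lia.
    + apply is_lim_seq_INR_of_ge; intros l; destruct (Hseq l) as [Hl _]; lia.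
    + eapply Rbar_lt_le_trans; [|exact Hinf]; simpl.
      apply Rdiv_lt_0_compat; [lra|apply lt_0_INR; lia].
    + eapply Rbar_le_lt_trans; [exact Hsup|simpl; lra].
Qed.
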